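(* Suppose Assumptions 1–4 hold. Let $\mathbf{x}$ be a Cournot candidate and $\mathbf{x}^S$ a social optimum, with $X=\sum_n x_n$ and $X^S=\sum_n x^S_n$. If $p(X)\neq p(X^S)$, then $p(X)>p(X^S)$ and $X<X^S$.
   Context: Cournot model: $N$ suppliers, inverse demand $p:[0,\infty)\to[0,\infty)$, supplier $n$ has cost $C_n:[0,\infty)\to[0,\infty)$ and chooses $x_n\ge0$; $X=\sum_n x_n$. $\partial_\pm$ denote right/left derivatives; $C_n'(0)$ is the right derivative at $0$. Assumption 1: each $C_n$ is convex, continuous, nondecreasing on $[0,\infty)$, continuously differentiable on $(0,\infty)$, with $C_n(0)=0$. Assumption 2: $p$ is continuous, nonnegative, nonincreasing, $p(0)>0$; its right derivative at $0$ exists and at every $q>0$ its left and right derivatives exist. Assumption 3: there exists $R>0$ such that $p(R)\le\min_n C_n'(0)$. Assumption 4: $p(0)>\min_n C_n'(0)$. A social optimum is a nonnegative vector maximizing $\int_0^X p(q)\,dq-\sum_n C_n(x_n)$. A nonnegative vector $\mathbf{x}$ is a Cournot candidate if for every $n$: $C_n'(x_n)\le p(X)+x_n\,\partial_-p(X)$ whenever $x_n>0$, and $C_n'(x_n)\ge p(X)+x_n\,\partial_+p(X)$. *)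

From Stdlib Require Import Reals Lra.
Open Scope R_scope.

Fixpoint sumR (N : nat) (f : nat -> R) : R :=
  match N with O => 0 | S k => sumR k f + f k end.

Definition right_deriv (f : R -> R) (x l : R) : Prop :=
  forall eps, 0 < eps -> exists delta, 0 < delta /\
    forall h, 0 < h < delta -> Rabs ((f (x + h) - f x) / h - l) < eps.

Definition left_deriv (f : R -> R) (x l : R) : Prop :=
  forall eps, 0 < eps -> exists delta, 0 < delta /\
    forall h, 0 < h < delta -> Rabs ((f x - f (x - h)) / h - l) < eps.

Definition cont_nonneg (f : R -> R) : Prop :=
  forall x, 0 <= x -> forall eps, 0 < eps -> exists delta, 0 < delta /\
    forall y, 0 <= y -> Rabs (y - x) < delta -> Rabs (f y - f x) < eps.

Definition convex_nonneg (f : R -> R) : Prop :=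
  forall a b t, 0 <= a -> 0 <= b -> 0 <= t <= 1 ->
    f (t * a + (1 - t) * b) <= t * f a + (1 - t) * f b.

Definition nondecr_nonneg (f : R -> R) : Prop :=
  forall a b, 0 <= a <= b -> f a <= f b.

Definition nonincr_nonneg (f : R -> R) : Prop :=
  forall a b, 0 <= a <= b -> f b <= f a.

(* Assumption 1 for a cost function C with derivative dC
   (dC 0 is the right derivative at 0, dC x the derivative for x > 0). *)
Definition cost_ok (C dC : R -> R) : Prop :=
  convex_nonneg C /\ cont_nonneg C /\ nondecr_nonneg C /\ C 0 = 0 /\
  right_deriv C 0 (dC 0) /\
  (forall x, 0 < x -> derivable_pt_lim C x (dC x)) /\
  (forall x, 0 < x -> continuity_pt dC x).

Definition integral_is (f : R -> R) (a b v : R) : Prop :=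
  exists pr : Riemann_integrable f a b, RiemannInt pr = v.

Definition nonneg_vec (N : nat) (x : nat -> R) : Prop :=
  forall n, (n < N)%nat -> 0 <= x n.

Definition social_optimum (N : nat) (p : R -> R) (C : nat -> R -> R)
  (xS : nat -> R) : Prop :=
  nonneg_vec N xS /\
  forall y : nat -> R, nonneg_vec N y ->
    forall vy vS, integral_is p 0 (sumR N y) vy ->
      integral_is p 0 (sumR N xS) vS ->
      vy - sumR N (fun n => C n (y n)) <= vS - sumR N (fun n => C n (xS n)).

(* Cournot candidate; dC n is C_n', dpL / dpR the left/right derivatives of p *)
Definition cournot_candidate (N : nat) (p dpL dpR : R -> R)
  (dC : nat -> R -> R) (x : nat -> R) : Prop :=
  nonneg_vec N x /\
  forall n, (n < N)%nat ->
    (0 < x n -> dC n (x n) <= p (sumR N x) + x n * dpL (sumR N x)) /\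
    dC n (x n) >= p (sumR N x) + x n * dpR (sumR N x).

From Stdlib Require Import Reals Lra Lia.
From Coquelicot Require Import Coquelicot.
Open Scope R_scope.

(* Proposition 7: at a Cournot candidate x the price is at least the price at
   a social optimum xS; hence if the two prices differ, p(X) > p(X^S), and then
   X < X^S because p is nonincreasing.

   The price inequality p(X^S) <= p(X) is trivial when X <= X^S.  Otherwise some
   supplier n produces more at x than at xS: a := xS_n < b := x_n.  Then for
   every small h > 0
     p(X^S + h) <= (C_n(a+h) - C_n(a)) / h     (xS cannot gain by raising xS_n)
                <= (C_n(b) - C_n(a)) / (b - a)  (chord slopes of a convex C_n)
                <= C_n'(b) <= p(X)              (Cournot condition, p' <= 0),
   and letting h -> 0 by continuity of p gives p(X^S) <= p(X). *)

Lemma sumR_ext N f g :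
  (forall m, (m < N)%nat -> f m = g m) -> sumR N f = sumR N g.
Proof.
  induction N as [|N IH]; intros Hfg; simpl; [reflexivity|].
  rewrite IH by (intros; apply Hfg; lia). rewrite (Hfg N) by lia. reflexivity.
Qed.

Lemma sumR_update N f g n : (n < N)%nat -> (forall m, m <> n -> f m = g m) ->
  sumR N f = sumR N g + (f n - g n).
Proof.
  induction N as [|N IH]; intros Hn Hfg; simpl; [lia|].
  destruct (Nat.eq_dec n N) as [->|Hne].
  - rewrite (sumR_ext N f g) by (intros; apply Hfg; lia). lra.
  - rewrite IH by (auto; lia). rewrite (Hfg N) by auto. lra.
Qed.

Lemma sumR_lt_exists N f g :
  sumR N g < sumR N f -> exists n, (n < N)%nat /\ g n < f n.
Proof.
  induction N as [|N IH]; simpl; intros Hlt; [lra|].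
  destruct (Rlt_dec (g N) (f N)) as [HN|HN].
  - exists N; split; [lia | exact HN].
  - destruct IH as [k [Hk Hgk]]; [lra|]. exists k; split; [lia | exact Hgk].
Qed.

Lemma sumR_nonneg N f : nonneg_vec N f -> 0 <= sumR N f.
Proof.
  induction N as [|N IH]; simpl; intros Hf; [lra|].
  assert (0 <= f N) by (apply Hf; lia).
  assert (0 <= sumR N f) by (apply IH; intros k Hk; apply Hf; lia). lra.
Qed.

Lemma sumR_component_le N f n : nonneg_vec N f -> (n < N)%nat -> f n <= sumR N f.
Proof.
  induction N as [|N IH]; simpl; intros Hf Hn; [lia|].
  assert (Hrest : 0 <= sumR N f) by (apply sumR_nonneg; intros k Hk; apply Hf; lia).
  destruct (Nat.eq_dec n N) as [->|Hne]; [lra|].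
  assert (0 <= f N) by (apply Hf; lia).
  assert (f n <= sumR N f) by (apply IH; [intros k Hk; apply Hf | ]; lia). lra.
Qed.

Lemma frac_le a b c d : 0 < b -> 0 < d -> a * d <= c * b -> a / b <= c / d.
Proof.
  intros Hb Hd H.
  assert (Ha : a = a / b * b) by (field; lra).
  assert (Hc : c = c / d * d) by (field; lra).
  rewrite Ha, Hc in H.
  apply (Rmult_le_reg_r (b * d)); [nra|]. nra.
Qed.

Definition slope (f : R -> R) (u v : R) : R := (f v - f u) / (v - u).

Lemma convex_three_points f u v w : convex_nonneg f -> 0 <= u -> u < v -> v < w ->
  (w - u) * f v <= (w - v) * f u + (v - u) * f w.
Proof.
  intros Hf Hu Huv Hvw.
  set (t := (w - v) / (w - u)).
  assert (Ht : 0 <= t <= 1).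
  { assert (0 < / (w - u)) by (apply Rinv_0_lt_compat; lra).
    assert (Hwu : (w - u) * / (w - u) = 1) by (field; lra).
    unfold t, Rdiv; split; nra. }
  assert (Hv : t * u + (1 - t) * w = v) by (unfold t; field; lra).
  pose proof (Hf u w t Hu ltac:(lra) Ht) as Hconv. rewrite Hv in Hconv.
  replace ((w - v) * f u + (v - u) * f w)
    with ((w - u) * (t * f u + (1 - t) * f w)) by (unfold t; field; lra).
  apply Rmult_le_compat_l; lra.
Qed.

Lemma slope_le_left f u v w : convex_nonneg f -> 0 <= u -> u < v -> v < w ->
  slope f u v <= slope f u w.
Proof.
  intros Hf Hu Huv Hvw. pose proof (convex_three_points f u v w Hf Hu Huv Hvw).
  unfold slope; apply frac_le; lra.
Qed.

Lemma slope_le_right f u v w : convex_nonneg f -> 0 <= u -> u < v -> v < w ->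
  slope f u w <= slope f v w.
Proof.
  intros Hf Hu Huv Hvw. pose proof (convex_three_points f u v w Hf Hu Huv Hvw).
  unfold slope; apply frac_le; lra.
Qed.

Lemma slope_le_deriv f a b l : convex_nonneg f -> 0 <= a -> a < b ->
  derivable_pt_lim f b l -> slope f a b <= l.
Proof.
  intros Hf Ha Hab Hl. apply Rle_plus_epsilon; intros eps Heps.
  destruct (Hl eps Heps) as [delta Hdelta].
  set (k := Rmin (delta / 2) ((b - a) / 2)).
  assert (Hk : 0 < k < delta /\ k < b - a).
  { pose proof (cond_pos delta). unfold k, Rmin; destruct Rle_dec; lra. }
  assert (Hquot : Rabs ((f (b + - k) - f b) / - k - l) < eps).
  { apply Hdelta; [lra|]. rewrite Rabs_Ropp, Rabs_right; lra. }
  replace ((f (b + - k) - f b) / - k) with (slope f (b - k) b) in Hquot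
    by (unfold slope; replace (b + - k) with (b - k) by ring; field; lra).
  apply Rabs_def2 in Hquot.
  pose proof (slope_le_right f a (b - k) b Hf Ha ltac:(lra) ltac:(lra)). lra.
Qed.

Lemma left_deriv_nonincr_nonpos p X l :
  nonincr_nonneg p -> 0 < X -> left_deriv p X l -> l <= 0.
Proof.
  intros Hp HX Hl. apply Rle_plus_epsilon; intros eps Heps.
  destruct (Hl eps Heps) as [delta [Hdelta Hquot]].
  set (h := Rmin (delta / 2) X).
  assert (Hh : 0 < h < delta /\ h <= X)
    by (unfold h, Rmin; destruct Rle_dec; lra).
  specialize (Hquot h ltac:(lra)). apply Rabs_def2 in Hquot.
  assert (Hdrop : (p X - p (X - h)) / h <= 0).
  { assert (p X <= p (X - h)) by (apply Hp; lra).
    assert (0 < / h) by (apply Rinv_0_lt_compat; lra).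
    unfold Rdiv; nra. }
  lra.
Qed.

Lemma le_of_right_bound p x c M : cont_nonneg p -> 0 <= x -> 0 < c ->
  (forall h, 0 < h < c -> p (x + h) <= M) -> p x <= M.
Proof.
  intros Hp Hx Hc Hbound. apply Rle_plus_epsilon; intros eps Heps.
  destruct (Hp x Hx eps Heps) as [delta [Hdelta Hclose]].
  set (h := Rmin (delta / 2) (c / 2)).
  assert (Hh : 0 < h < delta /\ h < c)
    by (unfold h, Rmin; destruct Rle_dec; lra).
  assert (Hph : Rabs (p (x + h) - p x) < eps).
  { apply Hclose; [lra|]. replace (x + h - x) with h by ring.
    rewrite Rabs_right; lra. }
  apply Rabs_def2 in Hph. pose proof (Hbound h ltac:(lra)). lra.
Qed.

Lemma ex_RInt_cont_nonneg p b : cont_nonneg p -> 0 <= b -> ex_RInt p 0 b.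
Proof.
  intros Hp Hb.
  apply (ex_RInt_ext (fun t => p (Rmax 0 t))).
  { intros t Ht. rewrite Rmin_left in Ht by lra. rewrite Rmax_right in Ht by lra.
    rewrite Rmax_right by lra. reflexivity. }
  apply (@ex_RInt_continuous R_CompleteNormedModule). intros z _.
  apply continuity_pt_filterlim.
  unfold continuity_pt, continue_in, limit1_in, limit_in; simpl; unfold R_dist.
  intros eps Heps.
  destruct (Hp (Rmax 0 z) (Rmax_l 0 z) eps Heps) as [delta [Hdelta Hclose]].
  exists delta; split; [exact Hdelta|]. intros y [_ Hy].
  apply Hclose; [apply Rmax_l|].
  assert (Rabs (Rmax 0 y - Rmax 0 z) <= Rabs (y - z))
    by (unfold Rmax; destruct (Rle_dec 0 y); destruct (Rle_dec 0 z);
        unfold Rabs; repeat destruct Rcase_abs; lra).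
  lra.
Qed.

Lemma integral_is_RInt p b : cont_nonneg p -> 0 <= b -> integral_is p 0 b (RInt p 0 b).
Proof.
  intros Hp Hb. exists (ex_RInt_Reals_0 _ _ _ (ex_RInt_cont_nonneg p b Hp Hb)).
  symmetry; apply RInt_Reals.
Qed.

Lemma RInt_increment_ge p b h : cont_nonneg p -> nonincr_nonneg p -> 0 <= b -> 0 < h ->
  h * p (b + h) <= RInt p 0 (b + h) - RInt p 0 b.
Proof.
  intros Hp Hdec Hb Hh.
  assert (I0b : ex_RInt p 0 b) by (apply ex_RInt_cont_nonneg; auto).
  assert (I0bh : ex_RInt p 0 (b + h)) by (apply ex_RInt_cont_nonneg; auto; lra).
  assert (Ibbh : ex_RInt p b (b + h)) by (apply (ex_RInt_Chasles_2 p 0); auto; lra).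
  pose proof (RInt_Chasles p 0 b (b + h) I0b Ibbh) as Hchasles.
  assert (Hlow : RInt (fun _ => p (b + h)) b (b + h) <= RInt p b (b + h)).
  { apply RInt_le; [lra | apply ex_RInt_const | exact Ibbh |].
    intros t Ht. apply Hdec; lra. }
  rewrite RInt_const in Hlow.
  unfold scal, plus in *; simpl in *; unfold mult in Hlow; simpl in Hlow.
  replace (b + h - b) with h in Hlow by ring. lra.
Qed.

Definition raise (y : nat -> R) (n : nat) (h : R) : nat -> R :=
  fun m => if Nat.eq_dec m n then y m + h else y m.

Section Market.

Variables (N : nat) (p dpL dpR : R -> R) (C dC : nat -> R -> R).
Hypothesis Hpc : cont_nonneg p.
Hypothesis Hpdec : nonincr_nonneg p.

(* At a social optimum, the welfare gain of raising supplier n by h is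
   nonpositive; bounding the extra consumer surplus below by h p(X^S + h)
   gives a bound of the marginal benefit by the marginal cost. *)
Lemma social_optimum_marginal xS n h : social_optimum N p C xS -> (n < N)%nat -> 0 < h ->
  h * p (sumR N xS + h) <= C n (xS n + h) - C n (xS n).
Proof.
  intros [HSnn HSopt] Hn Hh.
  set (y := raise xS n h).
  assert (Hraise : forall m, m <> n -> y m = xS m)
    by (intros m Hm; unfold y, raise; destruct Nat.eq_dec; congruence).
  assert (Hyn : y n = xS n + h)
    by (unfold y, raise; destruct Nat.eq_dec; congruence).
  assert (Hy : nonneg_vec N y).
  { intros m Hm. destruct (Nat.eq_dec m n) as [->|Hne].
    - rewrite Hyn. pose proof (HSnn n Hm). lra.
    - rewrite Hraise by exact Hne. apply HSnn, Hm. }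
  assert (Hsum : sumR N y = sumR N xS + h)
    by (rewrite (sumR_update N y xS n Hn Hraise), Hyn; ring).
  assert (Hcost : sumR N (fun m => C m (y m)) =
                  sumR N (fun m => C m (xS m)) + (C n (xS n + h) - C n (xS n))).
  { rewrite (sumR_update N (fun m => C m (y m)) (fun m => C m (xS m)) n Hn)
      by (intros m Hm; rewrite Hraise by exact Hm; reflexivity).
    rewrite Hyn; reflexivity. }
  assert (HXS : 0 <= sumR N xS) by (apply sumR_nonneg, HSnn).
  pose proof (HSopt y Hy _ _
    (integral_is_RInt p (sumR N y) Hpc ltac:(rewrite Hsum; lra))
    (integral_is_RInt p (sumR N xS) Hpc HXS)) as Hwelfare.
  rewrite Hcost, Hsum in Hwelfare.
  pose proof (RInt_increment_ge p (sumR N xS) h Hpc Hpdec HXS Hh). lra.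
Qed.

Hypothesis HdpL : forall q, 0 < q -> left_deriv p q (dpL q).

(* At a Cournot candidate, an active supplier's marginal cost is at most the
   price, since the left derivative of p is nonpositive. *)
Lemma cournot_marginal_cost_le_price x n : cournot_candidate N p dpL dpR dC x ->
  (n < N)%nat -> 0 < x n -> dC n (x n) <= p (sumR N x).
Proof.
  intros [Hxnn Hfoc] Hn Hxn.
  assert (HX : 0 < sumR N x) by (pose proof (sumR_component_le N x n Hxnn Hn); lra).
  pose proof (left_deriv_nonincr_nonpos p _ _ Hpdec HX (HdpL _ HX)).
  destruct (Hfoc n Hn) as [Hupper _]. specialize (Hupper Hxn). nra.
Qed.

Hypothesis HC : forall n, (n < N)%nat -> cost_ok (C n) (dC n).

Lemma optimum_price_le_cournot_price x xS :
  cournot_candidate N p dpL dpR dC x -> social_optimum N p C xS ->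
  p (sumR N xS) <= p (sumR N x).
Proof.
  intros Hx HxS.
  assert (HXS : 0 <= sumR N xS) by (apply sumR_nonneg, (proj1 HxS)).
  destruct (Rle_dec (sumR N x) (sumR N xS)) as [Hle|Hgt].
  { apply Hpdec; split; [apply sumR_nonneg, (proj1 Hx) | exact Hle]. }
  destruct (sumR_lt_exists N x xS ltac:(lra)) as [n [Hn Hlt]].
  assert (Ha : 0 <= xS n) by (apply (proj1 HxS), Hn).
  destruct (HC n Hn) as [Hconv [_ [_ [_ [_ [Hderiv _]]]]]].
  apply (le_of_right_bound p _ (x n - xS n) _ Hpc HXS ltac:(lra)).
  intros h Hh.
  assert (Hmarg : p (sumR N xS + h) <= slope (C n) (xS n) (xS n + h)).
  { unfold slope; replace (xS n + h - xS n) with h by ring.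
    pose proof (social_optimum_marginal xS n h HxS Hn ltac:(lra)).
    apply (Rmult_le_reg_r h); [lra|].
    unfold Rdiv; rewrite Rmult_assoc, Rinv_l by lra. lra. }
  pose proof (slope_le_left (C n) (xS n) (xS n + h) (x n) Hconv Ha ltac:(lra) ltac:(lra)).
  pose proof (slope_le_deriv (C n) (xS n) (x n) (dC n (x n)) Hconv Ha Hlt
               (Hderiv (x n) ltac:(lra))).
  pose proof (cournot_marginal_cost_le_price x n Hx Hn ltac:(lra)).
  lra.
Qed.

End Market.

Theorem proposition7
  (N : nat) (HN : (0 < N)%nat)
  (p dpL dpR : R -> R) (C dC : nat -> R -> R)
  (* Assumption 1 *)
  (HC : forall n, (n < N)%nat -> cost_ok (C n) (dC n))
  (* Assumption 2 *)
  (Hpc : cont_nonneg p) (Hpnn : forall q, 0 <= q -> 0 <= p q)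
  (Hpdec : nonincr_nonneg p) (Hp0 : 0 < p 0)
  (HdpR : forall q, 0 <= q -> right_deriv p q (dpR q))
  (HdpL : forall q, 0 < q -> left_deriv p q (dpL q))
  (* Assumption 3 *)
  (HA3 : exists Rb, 0 < Rb /\ forall n, (n < N)%nat -> p Rb <= dC n 0)
  (* Assumption 4 *)
  (HA4 : exists n, (n < N)%nat /\ dC n 0 < p 0)
  (x xS : nat -> R)
  (Hx : cournot_candidate N p dpL dpR dC x)
  (HxS : social_optimum N p C xS) :
  p (sumR N x) <> p (sumR N xS) ->
  p (sumR N x) > p (sumR N xS) /\ sumR N x < sumR N xS.
Proof.
  intros Hne.
  pose proof (optimum_price_le_cournot_price N p dpL dpR C dC Hpc Hpdec HdpL HC
                x xS Hx HxS) as Hprice.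
  assert (Hgt : p (sumR N x) > p (sumR N xS)) by lra.
  split; [exact Hgt|].
  destruct (Rlt_dec (sumR N x) (sumR N xS)) as [Hlt|Hge]; [exact Hlt|].
  assert (p (sumR N x) <= p (sumR N xS)).
  { apply Hpdec; split; [apply sumR_nonneg, (proj1 HxS) | lra]. }
  lra.
Qed.
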